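(* Let $\mathcal{D}=\{1,\dots,n\}$ and let $U:2^{\mathcal{D}}\to\mathbb{R}_{\ge0}$ be monotone submodular with $U(\emptyset)=0$, $U(\{i\})>0$ for all $i$, and curvature $c\in[0,1]$. Let $v$ be a weighted-marginal data value as defined in the context (e.g. any semi-value, Data Shapley, Data Banzhaf, or leave-one-out). Order $\mathcal{D}$ in decreasing order of $v$ (ties broken arbitrarily) and let $G_k$ be the set of the first $k$ elements. For each $k$ let $OPT_k\in\operatorname{argmax}_{S\subseteq\mathcal{D},|S|\le k}U(S)$. Then for every $k\in\{1,\dots,n\}$, $$U(G_k)\ge(1-c)^2\,U(OPT_k),$$ and consequently, for every $K\le n$, $$\sum_{k=1}^K U(G_k)\ge (1-c)^2\sum_{k=1}^K U(OPT_k).$$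
   Context: $U$ is monotone if $U(A)\le U(B)$ whenever $A\subseteq B$, and submodular if $U(A\cup\{i\})-U(A)\ge U(B\cup\{i\})-U(B)$ whenever $A\subseteq B\subseteq\mathcal{D}$ and $i\in\mathcal{D}\setminus B$. The curvature of $U$ is $c=1-\min_{i\in\mathcal{D}}\frac{U(\mathcal{D})-U(\mathcal{D}\setminus\{i\})}{U(\{i\})}$. A weighted-marginal data value is $v(i)=\sum_{S\subseteq\mathcal{D}\setminus\{i\}}w_i(S)\,[U(S\cup\{i\})-U(S)]$, where for each $i$ the weights satisfy $w_i(S)\ge0$ and $\sum_{S\subseteq\mathcal{D}\setminus\{i\}}w_i(S)=1$. (Semi-values are the case $w_i(S)=\beta_{|S|}$ with $\beta_k\ge0$, $\sum_{k=0}^{n-1}\binom{n-1}{k}\beta_k=1$; leave-one-out is $w_i(S)=1$ iff $S=\mathcal{D}\setminus\{i\}$.) *)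

From HB Require Import structures.
From mathcomp Require Import all_boot all_order all_algebra all_fingroup.
Set Implicit Arguments. Unset Strict Implicit. Unset Printing Implicit Defensive.
Import Order.TTheory GRing.Theory Num.Theory.
Local Open Scope ring_scope.

(* Ground set D = {1..n} is modelled by 'I_n; utilities are U : {set 'I_n} -> R. *)

Definition monotone_fn (R : realFieldType) (n : nat) (U : {set 'I_n} -> R) :=
  forall A B : {set 'I_n}, A \subset B -> U A <= U B.

Definition submodular_fn (R : realFieldType) (n : nat) (U : {set 'I_n} -> R) :=
  forall (A B : {set 'I_n}) (i : 'I_n), A \subset B -> i \notin B ->
    U (i |: A) - U A >= U (i |: B) - U B.

(* c is the curvature 1 - min_i (U(D) - U(D \ {i})) / U({i}):
   c is 1 minus the minimum of the ratios (the minimum is attained and is a lower bound). *)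
Definition curvature_ratio (R : realFieldType) (n : nat) (U : {set 'I_n} -> R) (i : 'I_n) : R :=
  (U [set: 'I_n] - U ([set: 'I_n] :\ i)) / U [set i].

Definition is_curvature (R : realFieldType) (n : nat) (U : {set 'I_n} -> R) (c : R) :=
  (exists i : 'I_n, curvature_ratio U i = 1 - c) /\
  (forall i : 'I_n, 1 - c <= curvature_ratio U i).

Definition valid_weights (R : realFieldType) (n : nat) (w : 'I_n -> {set 'I_n} -> R) :=
  (forall (i : 'I_n) (S : {set 'I_n}), i \notin S -> 0 <= w i S) /\
  (forall i, \sum_(S : {set 'I_n} | i \notin S) w i S = 1).

Definition wm_value (R : realFieldType) (n : nat) (U : {set 'I_n} -> R)
  (w : 'I_n -> {set 'I_n} -> R) (i : 'I_n) : R :=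
  \sum_(S : {set 'I_n} | i \notin S) w i S * (U (i |: S) - U S).

Definition decreasing_order (R : realFieldType) (n : nat) (v : 'I_n -> R) (sigma : 'S_n) :=
  forall a b : 'I_n, (a <= b)%N -> v (sigma b) <= v (sigma a).

Definition prefix_set (n : nat) (sigma : 'S_n) (k : nat) : {set 'I_n} :=
  [set sigma j | j : 'I_n & (j < k)%N].

Definition is_opt (R : realFieldType) (n : nat) (U : {set 'I_n} -> R) (k : nat) (O : {set 'I_n}) :=
  (#|O| <= k)%N /\ forall S : {set 'I_n}, (#|S| <= k)%N -> U S <= U O.

From HB Require Import structures.
From mathcomp Require Import all_boot all_order all_algebra all_fingroup.
From mathcomp Require Import zify.
Set Implicit Arguments.
Unset Strict Implicit.
Unset Printing Implicit Defensive.
Import Order.TTheory GRing.Theory Num.Theory.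
Local Open Scope ring_scope.

(* Write m_i := U(D) - U(D \ {i}).  Submodularity sandwiches every weighted-
   marginal value, since each of its marginals lies between m_i and U({i}),
   and the curvature bounds m_i from below:
     (1 - c) U({i}) <= m_i <= v(i) <= U({i}).
   Subadditivity and submodularity give sum_(i in A) m_i <= U(A) <= sum_(i in A) U({i}),
   and G_k maximises sum_(i in S) v(i) over |S| <= k.  Chaining,
     (1-c)^2 U(OPT_k) <= (1-c)^2 sum_OPT U({i}) <= (1-c) sum_OPT v <= (1-c) sum_G v
                      <= (1-c) sum_G U({i}) <= sum_G m_i <= U(G_k). *)

Lemma finset_ind (T : finType) (P : {set T} -> Prop) :
  P set0 -> (forall (i : T) (A : {set T}), i \notin A -> P A -> P (i |: A)) ->
  forall A, P A.
Proof.
move=> P0 PU1 A; move: {2}#|A| (erefl #|A|) => m; elim: m A => [|m IHm] A cardA.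
  by move/eqP: cardA; rewrite cards_eq0 => /eqP ->.
have [i iA] : exists i, i \in A by apply/set0Pn; rewrite -card_gt0 cardA.
rewrite -(setD1K iA); apply: PU1; first by rewrite setD11.
by apply: IHm; move: cardA; rewrite (cardsD1 i) iA add1n => -[].
Qed.

Section Submodular.
Variables (R : realFieldType) (T : finType) (U : {set T} -> R).
Hypothesis U0 : U set0 = 0.
Hypothesis U_submod : forall (A B : {set T}) (i : T), A \subset B -> i \notin B ->
  U (i |: B) - U B <= U (i |: A) - U A.

Lemma marginal_le_singleton (A : {set T}) (i : T) :
  i \notin A -> U (i |: A) - U A <= U [set i].
Proof.
by move=> iA; have := U_submod (sub0set A) iA; rewrite setU0 U0 subr0.
Qed.

Lemma full_marginal_le_marginal (A : {set T}) (i : T) :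
  i \notin A -> U [set: T] - U ([set: T] :\ i) <= U (i |: A) - U A.
Proof.
move=> iA; have AsubD : A \subset [set: T] :\ i.
  by apply/subsetP => x xA; rewrite !inE andbT; apply: contraNneq iA => <-.
by have := @U_submod _ _ i AsubD; rewrite setD11 setD1K ?inE // => /(_ isT).
Qed.

Lemma sum_full_marginals_le (A : {set T}) :
  \sum_(i in A) (U [set: T] - U ([set: T] :\ i)) <= U A.
Proof.
elim/finset_ind: A => [|i A iA IHA]; first by rewrite big_set0 U0.
rewrite big_setU1 //= -[U (i |: A)](subrK (U A)).
exact: lerD (full_marginal_le_marginal iA) IHA.
Qed.

Lemma le_sum_singletons (A : {set T}) : U A <= \sum_(i in A) U [set i].
Proof.
elim/finset_ind: A => [|i A iA IHA]; first by rewrite big_set0 U0.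
rewrite big_setU1 //= -[U (i |: A)](subrK (U A)).
exact: lerD (marginal_le_singleton iA) IHA.
Qed.

End Submodular.

Section ConvexCombination.
Variables (R : realFieldType) (I : finType) (P : pred I) (w f : I -> R).
Hypothesis w_ge0 : forall i, P i -> 0 <= w i.
Hypothesis w_sum1 : \sum_(i | P i) w i = 1.

Lemma convex_comb_ge (a : R) :
  (forall i, P i -> a <= f i) -> a <= \sum_(i | P i) w i * f i.
Proof.
move=> af; rewrite -[a]mul1r -w_sum1 mulr_suml.
by apply: ler_sum => i Pi; rewrite ler_wpM2l ?w_ge0 ?af.
Qed.

Lemma convex_comb_le (b : R) :
  (forall i, P i -> f i <= b) -> \sum_(i | P i) w i * f i <= b.
Proof.
move=> fb; rewrite -[b]mul1r -w_sum1 mulr_suml.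
by apply: ler_sum => i Pi; rewrite ler_wpM2l ?w_ge0 ?fb.
Qed.

End ConvexCombination.

(* The threshold [m] must be nonnegative: [O] may have fewer elements than [G]. *)
Lemma ler_sum_above_threshold (R : realFieldType) (T : finType) (v : T -> R)
    (m : R) (G O : {set T}) :
  0 <= m -> (forall x, x \in G -> m <= v x) -> (forall x, x \notin G -> v x <= m) ->
  (#|O| <= #|G|)%N -> \sum_(i in O) v i <= \sum_(i in G) v i.
Proof.
move=> m_ge0 vG vNG cardOG.
rewrite (big_setID (A := O) G) (big_setID (A := G) O) /= setIC lerD2l.
apply: (@le_trans _ _ (\sum_(i in O :\: G) m)).
  by apply: ler_sum => i; rewrite inE => /andP[/vNG].
apply: (@le_trans _ _ (\sum_(i in G :\: O) m)); last first.
  by apply: ler_sum => i; rewrite inE => /andP[_ /vG].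
rewrite !sumr_const ler_wpMn2l //.
by have := cardsID G O; have := cardsID O G; rewrite setIC; lia.
Qed.

Lemma card_prefix_set (n : nat) (sigma : 'S_n) (k : nat) :
  (k <= n)%N -> #|prefix_set sigma k| = k.
Proof.
move=> kn; rewrite card_imset; last exact: perm_inj.
have -> : [set j : 'I_n | (j < k)%N] = [set widen_ord kn j | j : 'I_k].
  apply/setP => j; rewrite inE; apply/idP/imsetP => [jk | [j' _ ->]].
    by exists (Ordinal jk) => //; apply: val_inj.
  by rewrite /= ltn_ord.
rewrite card_imset ?card_ord // => a b /(congr1 val) eq_ab.
exact: val_inj.
Qed.

(* The value of the [k]-th element in the order, [sigma (k-1)], separates [G_k]
   from its complement. *)
Lemma ler_sum_prefix_set (R : realFieldType) (n : nat) (v : 'I_n -> R)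
    (sigma : 'S_n) (k : nat) (O : {set 'I_n}) :
  decreasing_order v sigma -> (forall i, 0 <= v i) -> (0 < k <= n)%N ->
  (#|O| <= k)%N -> \sum_(i in O) v i <= \sum_(i in prefix_set sigma k) v i.
Proof.
move=> sigma_dec v_ge0 /andP[k_gt0 kn] cardO.
have kpred_lt : (k.-1 < n)%N by rewrite prednK.
apply: (@ler_sum_above_threshold _ _ v (v (sigma (Ordinal kpred_lt)))).
- exact: v_ge0.
- move=> x /imsetP[j]; rewrite inE => jk ->; apply: sigma_dec => /=.
  by rewrite -ltnS prednK.
- move=> x xNG; rewrite -(permKV sigma x); apply: sigma_dec => /=.
  apply: leq_trans (leq_pred k) _; rewrite leqNgt; apply: contra xNG => xk.
  by rewrite -(permKV sigma x) imset_f // inE.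
- by rewrite card_prefix_set.
Qed.

Section DataValueBounds.
Variables (R : realFieldType) (n : nat) (U : {set 'I_n} -> R).
Hypothesis U0 : U set0 = 0.
Hypothesis U_submod : submodular_fn U.

Lemma curvature_le_full_marginal (c : R) (i : 'I_n) :
  is_curvature U c -> 0 < U [set i] ->
  (1 - c) * U [set i] <= U [set: 'I_n] - U ([set: 'I_n] :\ i).
Proof. by move=> [_ /(_ i)] + Ui_gt0; rewrite /curvature_ratio ler_pdivlMr. Qed.

Lemma full_marginal_le_wm_value (w : 'I_n -> {set 'I_n} -> R) (i : 'I_n) :
  valid_weights w -> U [set: 'I_n] - U ([set: 'I_n] :\ i) <= wm_value U w i.
Proof.
move=> [w_ge0 w_sum1]; apply: convex_comb_ge => [S|//|S].
  exact: w_ge0.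
exact: full_marginal_le_marginal.
Qed.

Lemma wm_value_le_singleton (w : 'I_n -> {set 'I_n} -> R) (i : 'I_n) :
  valid_weights w -> wm_value U w i <= U [set i].
Proof.
move=> [w_ge0 w_sum1]; apply: convex_comb_le => [S|//|S].
  exact: w_ge0.
exact: marginal_le_singleton.
Qed.

End DataValueBounds.

Lemma prefix_set_approx (R : realFieldType) (n : nat) (U : {set 'I_n} -> R) (c : R)
    (w : 'I_n -> {set 'I_n} -> R) (sigma : 'S_n) (k : nat) (O : {set 'I_n}) :
  U set0 = 0 -> submodular_fn U -> (forall i, 0 < U [set i]) ->
  is_curvature U c -> c <= 1 -> valid_weights w ->
  decreasing_order (wm_value U w) sigma -> (0 < k <= n)%N -> (#|O| <= k)%N ->
  (1 - c) ^+ 2 * U O <= U (prefix_set sigma k).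
Proof.
move=> U0 U_submod U1_gt0 curv c_le1 wv sigma_dec kn cardO.
set v := wm_value U w; set G := prefix_set sigma k.
have c'_ge0 : 0 <= 1 - c by rewrite subr_ge0.
have curv_le_v i : (1 - c) * U [set i] <= v i.
  apply: le_trans (full_marginal_le_wm_value U_submod _ wv).
  exact: curvature_le_full_marginal.
have v_ge0 i : 0 <= v i.
  exact: le_trans (mulr_ge0 c'_ge0 (ltW (U1_gt0 i))) (curv_le_v i).
have sumO : (1 - c) * \sum_(i in O) U [set i] <= \sum_(i in O) v i.
  by rewrite mulr_sumr; apply: ler_sum => i _.
have sumG : (1 - c) * \sum_(i in G) U [set i] <= U G.
  apply: le_trans (sum_full_marginals_le U0 U_submod G).
  by rewrite mulr_sumr; apply: ler_sum => i _; apply: curvature_le_full_marginal.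
apply: le_trans sumG; rewrite expr2 -mulrA ler_wpM2l //.
apply: le_trans (ler_wpM2l c'_ge0 (le_sum_singletons U0 U_submod O)) _.
apply: le_trans sumO (le_trans (ler_sum_prefix_set sigma_dec v_ge0 kn cardO) _).
by apply: ler_sum => i _; apply: wm_value_le_singleton.
Qed.

Theorem theorem4p3 (R : realFieldType) (n : nat) (U : {set 'I_n} -> R) (c : R)
  (w : 'I_n -> {set 'I_n} -> R) (sigma : 'S_n)
  (hU0 : U set0 = 0)
  (hUnn : forall S, 0 <= U S)
  (hmono : monotone_fn U)
  (hsub : submodular_fn U)
  (hsing : forall i : 'I_n, 0 < U [set i])
  (hc : is_curvature U c)
  (hc01 : 0 <= c <= 1)
  (hw : valid_weights w)
  (hsigma : decreasing_order (wm_value U w) sigma) :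
  (forall (k : nat) (O : {set 'I_n}), (1 <= k <= n)%N -> is_opt U k O ->
     (1 - c) ^+ 2 * U O <= U (prefix_set sigma k)) /\
  (forall (K : nat) (OPT : nat -> {set 'I_n}), (K <= n)%N ->
     (forall k, (1 <= k <= K)%N -> is_opt U k (OPT k)) ->
     (1 - c) ^+ 2 * \sum_(1 <= k < K.+1) U (OPT k)
       <= \sum_(1 <= k < K.+1) U (prefix_set sigma k)).
Proof.
have c_le1 : c <= 1 by case/andP: hc01.
have approx k O : (1 <= k <= n)%N -> is_opt U k O ->
    (1 - c) ^+ 2 * U O <= U (prefix_set sigma k).
  by move=> kn [cardO _]; apply: prefix_set_approx hsigma kn cardO.
split=> // K OPT Kn OPT_opt; rewrite mulr_sumr; apply: ler_sum_nat => k /andP[k_gt0 kK].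
apply: approx; last by apply: OPT_opt; rewrite k_gt0 -ltnS.
by rewrite k_gt0 (leq_trans _ Kn) // -ltnS.
Qed.
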